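(* Let $H=E_0|E_0\rangle\langle E_0|+E_1|E_1\rangle\langle E_1|$ be a non-degenerate Hamiltonian on a qubit ($E_0\ne E_1$, $\{|E_0\rangle,|E_1\rangle\}$ orthonormal), and let $|\psi_0\rangle=c_0|E_0\rangle+c_1|E_1\rangle$ with $|c_0|^2+|c_1|^2=1$. Let $\{|k_n\rangle\}_n$ be the Krylov basis generated from $|k_0\rangle=|\psi_0\rangle$ and $H$ by the Lanczos algorithm, and let $K(t)=\sum_n n|\langle k_n|e^{-iHt}|\psi_0\rangle|^2$ be the spread complexity. Then for all $t$, $$K(t)=C_{\ell_1}^2\sin^2\!\left(\frac{\omega t}{2}\right),$$ where $\omega=E_1-E_0$ and $C_{\ell_1}=2|c_0||c_1|$ is the $\ell_1$-norm of coherence of $|\psi_0\rangle$ in the basis $\{|E_0\rangle,|E_1\rangle\}$. *)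

From HB Require Import structures.
From mathcomp Require Import all_boot all_order all_algebra.
From mathcomp Require Import all_classical all_reals.
From mathcomp Require Import trigo.
From mathcomp.real_closed Require Import complex.

Set Implicit Arguments.
Unset Strict Implicit.
Unset Printing Implicit Defensive.

Import Order.TTheory GRing.Theory Num.Theory.
Local Open Scope ring_scope.
Local Open Scope complex_scope.

Section Qubit.
Variable R : realType.
Local Notation C := R[i].

Definition ket := 'cV[C]_2.

Definition bra (v : ket) : 'rV[C]_2 := (map_mx Num.conj v)^T.

Definition braket (u v : ket) : C := (bra u *m v) 0 0.

Definition knorm (v : ket) : C := sqrtC (braket v v).

Definition ketbra (u v : ket) : 'M[C]_2 := u *m bra v.

Definition hamiltonian (E0 E1 : R) (e0 e1 : ket) : 'M[C]_2 :=
  E0%:C *: ketbra e0 e0 + E1%:C *: ketbra e1 e1.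

Definition expmi (x : R) : C := cos x +i* (- sin x).

(* Time-evolution operator e^{-iHt}, defined by the spectral calculus of
   H = E0 |E0><E0| + E1 |E1><E1| (orthonormal eigenbasis):
   e^{-iHt} = e^{-i E0 t} |E0><E0| + e^{-i E1 t} |E1><E1|. *)
Definition evolution (E0 E1 : R) (e0 e1 : ket) (t : R) : 'M[C]_2 :=
  expmi (E0 * t) *: ketbra e0 e0 + expmi (E1 * t) *: ketbra e1 e1.

(* Starting from k_{-1} = 0, b_0 = 0, k_0 = psi0:
     a_n     = <k_n|H|k_n>
     A_{n+1} = (H - a_n) k_n - b_n k_{n-1}
     b_{n+1} = ||A_{n+1}||
     stop if b_{n+1} = 0, otherwise k_{n+1} = A_{n+1} / b_{n+1}.
   [lanczos_aux H fuel kp kc b] returns the list k_n, k_{n+1}, ... produced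
   from k_{n-1} = kp, k_n = kc, b_n = b, performing at most [fuel] further
   steps. *)
Fixpoint lanczos_aux (H : 'M[C]_2) (fuel : nat) (kp kc : ket) (b : C)
  : seq ket :=
  kc :: match fuel with
        | 0 => [::]
        | f.+1 =>
            let a := braket kc (H *m kc) in
            let A := H *m kc - a *: kc - b *: kp in
            let b' := knorm A in
            if b' == 0 then [::] else lanczos_aux H f kc (b'^-1 *: A) b'
        end.

(* In exact arithmetic the algorithm halts
   after at most dim = 2 vectors; we allow 2 iterations (i.e. up to 3
   candidate vectors), so the cap never cuts the algorithm short. *)
Definition krylov_basis (H : 'M[C]_2) (psi0 : ket) : seq ket :=
  lanczos_aux H 2 0 psi0 0.

Definition spread_complexity (H U : 'M[C]_2) (psi0 : ket) : C :=
  let kb := krylov_basis H psi0 in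
  \sum_(n < size kb) n%:R * `|braket (nth 0 kb n) (U *m psi0)| ^+ 2.

End Qubit.

(* In the orthonormal eigenbasis write p_j = |c_j|^2 and w = E1 - E0.  The first
   Lanczos residual is w (-p1 c0, p0 c1), of squared norm w^2 p0 p1.  If c0 c1 = 0
   it vanishes, the Krylov basis is {psi0} and K = 0.  Otherwise
   k1 = s (-p1 c0, p0 c1) with s real and s^2 p0 p1 = 1, the next residual
   vanishes, and K(t) = |<k1|e^{-iHt} psi0>|^2
   = |s p0 p1 (e^{-i E1 t} - e^{-i E0 t})|^2 = 4 p0 p1 sin^2 (w t / 2). *)
From HB Require Import structures.
From mathcomp Require Import all_boot all_order all_algebra.
From mathcomp Require Import all_classical all_reals.
From mathcomp Require Import trigo.
From mathcomp.real_closed Require Import complex.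
From mathcomp Require Import ring lra.
Import Order.TTheory GRing.Theory Num.Theory.
Set Implicit Arguments.
Unset Strict Implicit.
Local Open Scope complex_scope.
Local Open Scope ring_scope.

Section Braket.
Variable R : realType.
Implicit Types (u v w : ket R) (a : R[i]).

Lemma conjC_real (x : R) : (x%:C)^* = x%:C.
Proof. exact: conjc_real. Qed.

Lemma braketZr u v a : braket u (a *: v) = a * braket u v.
Proof. by rewrite /braket -scalemxAr mxE. Qed.

Lemma braketDr u v w : braket u (v + w) = braket u v + braket u w.
Proof. by rewrite /braket mulmxDr mxE. Qed.

Lemma conj_braket u v : (braket u v)^* = braket v u.
Proof.
rewrite /braket !mxE rmorph_sum; apply: eq_bigr => j _.
by rewrite !mxE rmorphM /= conjCK mulrC.
Qed.

Lemma braketZl u v a : braket (a *: u) v = a^* * braket u v.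
Proof. by rewrite -conj_braket braketZr rmorphM /= conj_braket. Qed.

Lemma braketDl u v w : braket (u + v) w = braket u w + braket v w.
Proof. by rewrite -conj_braket braketDr rmorphD /= !conj_braket. Qed.

Lemma braket_ge0 v : 0 <= braket v v.
Proof.
rewrite /braket !mxE; apply: sumr_ge0 => j _.
by rewrite !mxE mulrC -normCK exprn_ge0.
Qed.

Lemma knorm0 : knorm (0 : ket R) = 0.
Proof. by rewrite /knorm /braket mulmx0 mxE sqrtC0. Qed.

Lemma knormK v : knorm v ^+ 2 = braket v v.
Proof. exact: sqrtCK. Qed.

Lemma conj_knorm v : (knorm v)^* = knorm v.
Proof. by apply/conj_Creal/ger0_real; rewrite sqrtC_ge0 braket_ge0. Qed.

Lemma ketbra_mulmx u v w : ketbra u v *m w = braket v w *: u.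
Proof. by rewrite /ketbra -mulmxA [bra v *m w]mx11_scalar mul_mx_scalar. Qed.

End Braket.

Section Lanczos.
Variables (R : realType) (H : 'M[R[i]]_2).
Implicit Types (psi kp kc : ket R) (b : R[i]).

Definition lanczos_residual kp kc b : ket R :=
  H *m kc - braket kc (H *m kc) *: kc - b *: kp.

Lemma lanczos_auxS f kp kc b :
  let A := lanczos_residual kp kc b in
  lanczos_aux H f.+1 kp kc b =
  kc :: (if knorm A == 0 then [::]
         else lanczos_aux H f kc ((knorm A)^-1 *: A) (knorm A)).
Proof. by []. Qed.

Lemma krylov_basis_stop psi :
  knorm (lanczos_residual 0 psi 0) = 0 -> krylov_basis H psi = [:: psi].
Proof. by rewrite /krylov_basis lanczos_auxS => ->; rewrite eqxx. Qed.

Lemma krylov_basis_pair psi :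
  let A := lanczos_residual 0 psi 0 in let b := knorm A in
  b != 0 -> lanczos_residual psi (b^-1 *: A) b = 0 ->
  krylov_basis H psi = [:: psi; b^-1 *: A].
Proof.
move=> A b /negPf b_neq0 A2_eq0.
by rewrite /krylov_basis lanczos_auxS -/A -/b b_neq0 lanczos_auxS A2_eq0 knorm0 eqxx.
Qed.

Lemma spread_complexity_single U psi :
  krylov_basis H psi = [:: psi] -> spread_complexity H U psi = 0.
Proof. by rewrite /spread_complexity => ->; rewrite big_ord1 mul0r. Qed.

Lemma spread_complexity_pair U psi k :
  krylov_basis H psi = [:: psi; k] ->
  spread_complexity H U psi = `|braket k (U *m psi)| ^+ 2.
Proof.
by rewrite /spread_complexity => ->; rewrite big_ord_recr big_ord1 /= mul0r mul1r add0r.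
Qed.

End Lanczos.

Section OrthonormalBasis.
Variables (R : realType) (e0 e1 : ket R).
Hypotheses (e0_unit : braket e0 e0 = 1) (e1_unit : braket e1 e1 = 1)
  (e01_orth : braket e0 e1 = 0).

Let e10_orth : braket e1 e0 = 0.
Proof. by rewrite -conj_braket e01_orth rmorph0. Qed.

Definition ket_of (x0 x1 : R[i]) : ket R := x0 *: e0 + x1 *: e1.

Lemma braket_ket_of x0 x1 y0 y1 :
  braket (ket_of x0 x1) (ket_of y0 y1) = x0^* * y0 + x1^* * y1.
Proof.
rewrite /ket_of !braketDl !braketDr !braketZl !braketZr.
by rewrite e0_unit e1_unit e01_orth e10_orth; ring.
Qed.

Lemma scale_ket_of a x0 x1 : a *: ket_of x0 x1 = ket_of (a * x0) (a * x1).
Proof. by rewrite /ket_of scalerDr !scalerA. Qed.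

Lemma ket_ofB x0 x1 y0 y1 :
  ket_of x0 x1 - ket_of y0 y1 = ket_of (x0 - y0) (x1 - y1).
Proof. by rewrite /ket_of !scalerBl opprD addrACA. Qed.

Lemma ket_of0 : ket_of 0 0 = 0.
Proof. by rewrite /ket_of !scale0r addr0. Qed.

Lemma diag_mulmx_ket_of a0 a1 x0 x1 :
  (a0 *: ketbra e0 e0 + a1 *: ketbra e1 e1) *m ket_of x0 x1
  = ket_of (a0 * x0) (a1 * x1).
Proof.
have coord0 : braket e0 (ket_of x0 x1) = x0.
  by rewrite braketDr !braketZr e0_unit e01_orth mulr1 mulr0 addr0.
have coord1 : braket e1 (ket_of x0 x1) = x1.
  by rewrite braketDr !braketZr e1_unit e10_orth mulr1 mulr0 add0r.
by rewrite mulmxDl -!scalemxAl !ketbra_mulmx coord0 coord1 /ket_of !scalerA.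
Qed.

End OrthonormalBasis.

Lemma normr_expmiB (R : realType) (x y : R) :
  `|expmi x - expmi y| ^+ 2 = 4 * (sin ((x - y) / 2))%:C ^+ 2.
Proof.
rewrite -add_Re2_Im2 /=.
have -> : (4 : R[i]) = (4 : R)%:C by rewrite rmorphMn.
rewrite -rmorphXn -rmorphM; congr (_%:C).
have half_sum : x - y = (x - y) / 2 + (x - y) / 2 by field.
have cos_double : cos (x - y) = cos ((x - y) / 2) ^+ 2 - sin ((x - y) / 2) ^+ 2.
  by rewrite {1}half_sum cosD !expr2.
have := cosB x y; have := cos2Dsin2 x; have := cos2Dsin2 y.
have := cos2Dsin2 ((x - y) / 2).
nra.
Qed.

Section TwoLevel.
Variables (R : realType) (e0 e1 : ket R) (E0 E1 : R) (c0 c1 : R[i]).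
Hypotheses (e0_unit : braket e0 e0 = 1) (e1_unit : braket e1 e1 = 1)
  (e01_orth : braket e0 e1 = 0) (c_unit : `|c0| ^+ 2 + `|c1| ^+ 2 = 1).

Local Notation H := (hamiltonian E0 E1 e0 e1).
Local Notation psi := (ket_of e0 e1 c0 c1).
Local Notation omega := (E1 - E0)%:C.
Local Notation p0 := (c0 * c0^*).
Local Notation p1 := (c1 * c1^*).
Local Notation A1 := (lanczos_residual H 0 psi 0).

Let p_sum : p0 + p1 = 1.
Proof. by rewrite -!normCK. Qed.

Let p01_norm : p0 * p1 = `|c0 * c1| ^+ 2.
Proof. by rewrite normCK rmorphM; ring. Qed.

Lemma first_lanczos_residual :
  A1 = omega *: ket_of e0 e1 (- p1 * c0) (p0 * c1).
Proof.
rewrite /lanczos_residual scaler0 subr0 /hamiltonian diag_mulmx_ket_of //.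
rewrite braket_ket_of // scale_ket_of ket_ofB scale_ket_of; congr ket_of.
- transitivity (E0%:C * c0 * (1 - p0) - E1%:C * p1 * c0); first ring.
  by rewrite -p_sum rmorphB; ring.
- transitivity (E1%:C * c1 * (1 - p1) - E0%:C * p0 * c1); first ring.
  by rewrite -p_sum rmorphB; ring.
Qed.

Lemma braket_first_lanczos_residual : braket A1 A1 = omega ^+ 2 * (p0 * p1).
Proof.
rewrite first_lanczos_residual braketZl braketZr braket_ket_of //.
rewrite !(rmorphM, rmorphN) /= conjC_real !conjCK.
transitivity (omega ^+ 2 * (p0 * p1) * (p0 + p1)); first ring.
by rewrite p_sum mulr1.
Qed.

Lemma spread_complexity_incoherent U :
  c0 * c1 = 0 -> spread_complexity H U psi = 0.
Proof.
move=> c01_eq0; apply/spread_complexity_single/krylov_basis_stop.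
by rewrite /knorm braket_first_lanczos_residual p01_norm c01_eq0 normr0 expr0n mulr0 sqrtC0.
Qed.

Section Coherent.
Hypotheses (E_neq : E0 != E1) (c01_neq0 : c0 * c1 != 0).

Let b1 := knorm A1.
Let s := omega / b1.

Let p01_neq0 : p0 * p1 != 0.
Proof. by rewrite p01_norm sqrf_eq0 normr_eq0. Qed.

Let omega_neq0 : omega != 0.
Proof. by rewrite fmorph_eq0 subr_eq0 eq_sym. Qed.

Let b1_sq : b1 ^+ 2 = omega ^+ 2 * (p0 * p1).
Proof. by rewrite knormK braket_first_lanczos_residual. Qed.

Let b1_neq0 : b1 != 0.
Proof. by rewrite -sqrf_eq0 b1_sq mulf_neq0 ?sqrf_eq0. Qed.

Let s_real : s^* = s.
Proof. by rewrite /s fmorph_div /= conjC_real conj_knorm. Qed.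

Let s_sq : s ^+ 2 * (p0 * p1) = 1.
Proof. by rewrite /s expr_div_n b1_sq mulrAC divff // mulf_neq0 ?sqrf_eq0. Qed.

Let b1_eq : b1 = s * omega * (p0 * p1).
Proof. by apply: (mulIf b1_neq0); rewrite -expr2 b1_sq /s; field. Qed.

Lemma second_krylov_vector :
  b1^-1 *: A1 = ket_of e0 e1 (s * (- p1 * c0)) (s * (p0 * c1)).
Proof. by rewrite first_lanczos_residual scalerA mulrC scale_ket_of. Qed.

Lemma second_lanczos_residual : lanczos_residual H psi (b1^-1 *: A1) b1 = 0.
Proof.
rewrite second_krylov_vector; clearbody s.
rewrite /lanczos_residual /hamiltonian diag_mulmx_ket_of //.
have -> : braket (ket_of e0 e1 (s * (- p1 * c0)) (s * (p0 * c1)))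
    (ket_of e0 e1 (E0%:C * (s * (- p1 * c0))) (E1%:C * (s * (p0 * c1))))
    = E0%:C * p1 + E1%:C * p0.
  rewrite braket_ket_of // !(rmorphM, rmorphN) /= s_real !conjCK.
  transitivity (s ^+ 2 * (p0 * p1) * (E0%:C * p1 + E1%:C * p0)); first ring.
  by rewrite s_sq mul1r.
rewrite b1_eq !scale_ket_of !ket_ofB -(ket_of0 e0 e1) rmorphB; congr ket_of.
- transitivity (s * p1 * c0 * E0%:C * (p0 + p1 - 1)); first ring.
  by rewrite p_sum subrr mulr0.
- transitivity (- s * p0 * c1 * E1%:C * (p0 + p1 - 1)); first ring.
  by rewrite p_sum subrr mulr0.
Qed.

Lemma spread_complexity_coherent t :
  spread_complexity H (evolution E0 E1 e0 e1 t) psi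
  = p0 * p1 * `|expmi (E1 * t) - expmi (E0 * t)| ^+ 2.
Proof.
rewrite (spread_complexity_pair _ (krylov_basis_pair b1_neq0 second_lanczos_residual)).
rewrite second_krylov_vector; clearbody s.
rewrite /evolution diag_mulmx_ket_of // braket_ket_of // !(rmorphM, rmorphN) /=.
rewrite s_real !conjCK (_ : _ + _ = s * (p0 * p1) * (expmi (E1 * t) - expmi (E0 * t))).
  rewrite normrM exprMn normCK !rmorphM /= s_real !conjCK.
  set d := `|_| ^+ 2.
  transitivity (s ^+ 2 * (p0 * p1) * (p0 * p1) * d); first ring.
  by rewrite s_sq mul1r.
ring.
Qed.

End Coherent.

End TwoLevel.

Theorem proposition3 (R : realType) (E0 E1 : R) (e0 e1 : ket R)
  (c0 c1 : R[i]) (t : R) :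
  E0 != E1 ->
  braket e0 e0 = 1 -> braket e1 e1 = 1 -> braket e0 e1 = 0 ->
  `|c0| ^+ 2 + `|c1| ^+ 2 = 1 ->
  let H := hamiltonian E0 E1 e0 e1 in
  let psi0 := c0 *: e0 + c1 *: e1 in
  let omega := E1 - E0 in
  let C_l1 := 2 * `|c0| * `|c1| in
  spread_complexity H (evolution E0 E1 e0 e1 t) psi0
  = C_l1 ^+ 2 * (sin (omega * t / 2))%:C ^+ 2.
Proof.
move=> E_neq e0_unit e1_unit e01_orth c_unit H psi0 omega C_l1.
have [c01_eq0 | c01_neq0] := eqVneq (c0 * c1) 0.
  rewrite spread_complexity_incoherent // /C_l1 -mulrA -normrM c01_eq0.
  by rewrite normr0 mulr0 expr0n mul0r.
rewrite spread_complexity_coherent // normr_expmiB -mulrBl /C_l1 !exprMn !normCK.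
ring.
Qed.
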